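(* Let $K$ be a number field of degree $n_K$ and absolute discriminant $d_K$. Let $c,r,\eta$ be positive real numbers with $0<\eta\le\tfrac12$ and $$-\tfrac12<c-r<-\eta<1+\eta<c,$$ and let $T\ge 5/7$. With the notation below, \begin{align*} \int_{0}^\pi F_{c,r} (\theta)\, d\theta & \leq n_K \int_0^{\theta_{1 + \eta}} \log \zeta (\sigma)\, d \theta + \frac{1}{2(T+2)} \int_0^{\theta_{1 + \eta}} L_{-1}^{\star} (\theta)\, d\theta + {\theta_{1 + \eta}} \log (T+2)\\ & + n_K ( \log \zeta (1 + \eta)) (\theta_{-\eta} -\theta_{1 + \eta} ) + \Big( \log \frac{d_K(T+2)^{n_K}}{(2\pi)^{n_K}} \Big) \kappa_1 \\ & + \frac{n_K}{T+2}\kappa_4 + \frac{1}{2(T+2)} \int_{\theta_{1 + \eta}}^{\theta_{-\eta}} L_1^\star (\theta)\, d \theta +({\theta_{-\eta}} - {\theta_{1 + \eta}})\log (3(T+2))\\ & + n_K \int_{\theta_{-\eta}}^\pi \log \zeta (1 - \sigma)\, d\theta +\frac{1}{2(T+2)} \int_{\theta_{-\eta}}^\pi L_{-1}^\star (\theta )\, d \theta + (\pi -{\theta_{-\eta}})\log (T+2) + \frac{n_K}{T+2} \kappa_5, \end{align*} where inside the integrals $\sigma=c+r\cos\theta$.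
   Context: $\zeta$ is the Riemann zeta function. For $x\in\mathbb R$, $[x]$ is the integer closest to $x$ (ties broken toward $0$). For real $y$, $\theta_y=0$ if $c+r\le y$, $\theta_y=\arccos\frac{y-c}{r}$ if $c-r\le y\le c+r$, and $\theta_y=\pi$ if $y\le c-r$. For integers $j$, $$L_j(\theta)=\log\frac{(j+c+r\cos\theta)^2+(|r\sin\theta|+T)^2}{(T+2)^2},\qquad L^\star_j(\theta)=2r\sin\theta-4+\tfrac{7}{19}\big((j+c+r\cos\theta)^2+(r\sin\theta- 2)^2\big).$$ With $\sigma=c+r\cos\theta$: $\kappa_1=\int_{\theta_{1 + \eta}}^{\theta_{-\eta}} \frac{1+ \eta - \sigma}{2}\, d \theta + \int_{\theta_{-\eta}}^\pi \frac{1 - 2\sigma}{2}\, d \theta$, $\kappa_4=\frac{1}{4}\int_{\theta_{1+\eta}}^{\theta_{-\eta}}(1+\eta-\sigma)L^\star_1(\theta)\,d\theta$, $\kappa_5=\frac{1}{4}\int_{\theta_{-\eta}}^{\theta_{-1/2}}(1-2\sigma)L^\star_1(\theta)\,d\theta$. The function $F_{c,r}:[-\pi,\pi]\to\mathbb R$ is defined, with $\sigma=c+r\cos\theta$, by: for $\sigma\ge 1+\eta$, $F_{c,r}(\theta)=n_K\log\zeta(\sigma)+\frac12L_{-1}(\theta)+\log(T+2)$; for $-\eta\le\sigma<1+\eta$, $F_{c,r}(\theta)= n_K\log\zeta(1+\eta)+\frac{n_K(1+\eta-\sigma)+2}{4}L_1(\theta)+\frac{n_K(1+\eta-\sigma)+2}{2}\log(T+2)+\frac{1+\eta-\sigma}{2}\log\frac{d_K}{(2\pi)^{n_K}}+\log3$;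 for $\sigma<-\eta$, $F_{c,r}(\theta)= n_K\log\zeta(1-\sigma)+\frac{1}{2}L_{-1}(\theta)+\log(T+2)+\frac{1-2\sigma}{2}\log\Big(\frac{d_K(T+2)^{n_K}}{(2\pi)^{n_K}}\Big)+\frac{(1-2\sigma+2[\sigma])n_K}{4}L_{1-[\sigma]}(\theta)+\frac{n_K}{2}\sum_{j=1}^{-[\sigma]}L_{j-1}(\theta)$ (empty sum $=0$). *)

From Stdlib Require Import Reals Lra ZArith.
From Coquelicot Require Import Coquelicot.
Open Scope R_scope.

(** Riemann zeta function for real s (only used for s > 1, where the
    Dirichlet series sum_{n>=1} n^{-s} converges). *)
Definition zeta (s : R) : R := Series (fun n : nat => / Rpower (INR (n + 1)) s).

(** [x] : the integer closest to x, ties broken toward 0.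
    [up x - 1] is the floor of x in Stdlib. *)
Definition round0 (x : R) : Z :=
  let fl := (up x - 1)%Z in
  let fr := x - IZR fl in
  if Rlt_dec fr (1/2) then fl
  else if Rlt_dec (1/2) fr then (fl + 1)%Z
  else if Rlt_dec 0 x then fl else (fl + 1)%Z.

Definition theta_y (c r y : R) : R :=
  if Rle_dec (c + r) y then 0
  else if Rle_dec y (c - r) then PI
  else acos ((y - c) / r).

Definition Lj (c r T : R) (j : Z) (th : R) : R :=
  ln (((IZR j + c + r * cos th) ^ 2 + (Rabs (r * sin th) + T) ^ 2) / (T + 2) ^ 2).

Definition Lstar (c r : R) (j : Z) (th : R) : R :=
  2 * r * sin th - 4
  + 7 / 19 * ((IZR j + c + r * cos th) ^ 2 + (r * sin th - 2) ^ 2).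

Fixpoint sumL (c r T : R) (m : nat) (th : R) : R :=
  match m with
  | O => 0
  | S m' => sumL c r T m' th + Lj c r T (Z.of_nat m') th
  end.

Definition F_cr (nK : nat) (dK c r eta T : R) (th : R) : R :=
  let n := INR nK in
  let sigma := c + r * cos th in
  if Rle_dec (1 + eta) sigma then
    n * ln (zeta sigma) + 1/2 * Lj c r T (-1) th + ln (T + 2)
  else if Rle_dec (- eta) sigma then
    n * ln (zeta (1 + eta))
    + (n * (1 + eta - sigma) + 2) / 4 * Lj c r T 1 th
    + (n * (1 + eta - sigma) + 2) / 2 * ln (T + 2)
    + (1 + eta - sigma) / 2 * ln (dK / (2 * PI) ^ nK)
    + ln 3
  else
    n * ln (zeta (1 - sigma)) + 1/2 * Lj c r T (-1) th + ln (T + 2)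
    + (1 - 2 * sigma) / 2 * ln (dK * (T + 2) ^ nK / (2 * PI) ^ nK)
    + (1 - 2 * sigma + 2 * IZR (round0 sigma)) * n / 4
        * Lj c r T (1 - round0 sigma) th
    + n / 2 * sumL c r T (Z.to_nat (- round0 sigma)) th.

Definition kappa1 (c r eta : R) : R :=
  RInt (fun th => (1 + eta - (c + r * cos th)) / 2)
       (theta_y c r (1 + eta)) (theta_y c r (- eta))
  + RInt (fun th => (1 - 2 * (c + r * cos th)) / 2) (theta_y c r (- eta)) PI.

Definition kappa4 (c r eta : R) : R :=
  1 / 4 * RInt (fun th => (1 + eta - (c + r * cos th)) * Lstar c r 1 th)
               (theta_y c r (1 + eta)) (theta_y c r (- eta)).

Definition kappa5 (c r eta : R) : R :=
  1 / 4 * RInt (fun th => (1 - 2 * (c + r * cos th)) * Lstar c r 1 th)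
               (theta_y c r (- eta)) (theta_y c r (- (1/2))).

(* On [0, PI] the abscissa [sigma = c + r cos th] decreases, so [theta_y (1 + eta)]
   and [theta_y (- eta)] cut [0, PI] into the three ranges on which [F_cr] is given
   by its three formulas; on the last one [sigma] lies in (-1/2, -eta), so [[sigma] = 0]
   and the sum over [j] is empty.  On each range every [L_j] is bounded by
   [L*_j / (T + 2)] through [ln Q <= Q - 1] (here [sin th >= 0]), the coefficients in
   front of the [L_j] being nonnegative because [sigma < 1 + eta]; integrating and
   splitting the logarithms gives the bound.  The integrals of [log zeta (sigma)] exist
   because [zeta] is continuous on (1, +oo): its partial sums are uniformly Cauchy on
   every half-line (a, +oo), a > 1, by the telescoping estimate
   [(s - 1) (x + 1)^-s <= x^(1-s) - (x + 1)^(1-s)]. *)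

From Stdlib Require Import Reals ZArith Lra Lia.
From Coquelicot Require Import Coquelicot.
Open Scope R_scope.

Definition zeta_partial (s : R) (n : nat) : R :=
  sum_n (fun k : nat => / Rpower (INR (k + 1)) s) n.

Lemma zeta_partial_S s n :
  zeta_partial s (S n) = zeta_partial s n + / Rpower (INR (S n + 1)) s.
Proof. unfold zeta_partial. now rewrite sum_Sn. Qed.

Lemma zeta_partial_0 s : zeta_partial s 0 = 1.
Proof.
  unfold zeta_partial. rewrite sum_O. simpl.
  unfold Rpower. now rewrite ln_1, Rmult_0_r, exp_0, Rinv_1.
Qed.

Lemma zeta_partial_le s n m : (n <= m)%nat -> zeta_partial s n <= zeta_partial s m.
Proof.
  induction 1 as [|m _ IH]; [lra|].
  rewrite zeta_partial_S.
  assert (0 < / Rpower (INR (S m + 1)) s) by (apply Rinv_0_lt_compat, exp_pos).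
  lra.
Qed.

(* [x^(1-s) = (x+1)^(1-s) exp((1-s) ln(x/(x+1)))], [exp t >= 1 + t] and
   [ln(x/(x+1)) <= -1/(x+1)]. *)
Lemma inv_Rpower_le_diff x s : 0 < x -> 1 < s ->
  (s - 1) / Rpower (x + 1) s <= Rpower x (1 - s) - Rpower (x + 1) (1 - s).
Proof.
  intros Hx Hs. set (y := x + 1).
  assert (Hy : 0 < y) by (unfold y; lra).
  assert (Hln : ln x - ln y <= - / y).
  { rewrite <- ln_div by lra.
    pose proof (exp_ineq1_le (ln (x / y))) as E.
    rewrite exp_ln in E by (apply Rdiv_lt_0_compat; lra).
    replace (- / y) with (x / y - 1) by (unfold y; field; lra). lra. }
  assert (Ex : Rpower x (1 - s) = Rpower y (1 - s) * exp ((1 - s) * (ln x - ln y))).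
  { unfold Rpower. rewrite <- exp_plus. f_equal. ring. }
  assert (Ey : (s - 1) / Rpower y s = Rpower y (1 - s) * ((s - 1) / y)).
  { replace (1 - s) with (1 + - s) by ring.
    rewrite Rpower_plus, Rpower_1, Rpower_Ropp by lra. field.
    split; [lra | apply Rgt_not_eq, exp_pos]. }
  assert (Hexp : (s - 1) / y <= exp ((1 - s) * (ln x - ln y)) - 1).
  { pose proof (exp_ineq1_le ((1 - s) * (ln x - ln y))).
    assert ((s - 1) / y <= (1 - s) * (ln x - ln y)).
    { unfold Rdiv. rewrite <- (Ropp_involutive (/ y)). nra. }
    lra. }
  assert (Hpos : 0 < Rpower y (1 - s)) by apply exp_pos.
  rewrite Ey, Ex. nra.
Qed.

Lemma zeta_partial_tail_telescope s n m : 1 < s ->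
  (s - 1) * (zeta_partial s (n + m) - zeta_partial s n)
    <= Rpower (INR (n + 1)) (1 - s) - Rpower (INR (n + m + 1)) (1 - s).
Proof.
  intros Hs. induction m as [|m IH].
  - rewrite Nat.add_0_r. lra.
  - replace (n + S m)%nat with (S (n + m)) by lia.
    rewrite zeta_partial_S.
    replace (S (n + m) + 1)%nat with (S (n + m + 1)) by lia.
    rewrite (S_INR (n + m + 1)).
    pose proof (inv_Rpower_le_diff (INR (n + m + 1)) s
                  ltac:(apply lt_0_INR; lia) Hs) as K.
    unfold Rdiv in K. lra.
Qed.

Lemma zeta_partial_tail_le s n m : 1 < s -> (n <= m)%nat ->
  zeta_partial s m - zeta_partial s n <= Rpower (INR (n + 1)) (1 - s) / (s - 1).
Proof.
  intros Hs Hnm. replace m with (n + (m - n))%nat by lia.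
  pose proof (zeta_partial_tail_telescope s n (m - n) Hs).
  assert (0 < Rpower (INR (n + (m - n) + 1)) (1 - s)) by apply exp_pos.
  apply (Rmult_le_reg_l (s - 1)); [lra|].
  replace ((s - 1) * (Rpower (INR (n + 1)) (1 - s) / (s - 1)))
    with (Rpower (INR (n + 1)) (1 - s)) by (field; lra).
  lra.
Qed.

Lemma zeta_ge_1 s : 1 < s -> 1 <= zeta s.
Proof.
  intros Hs.
  assert (Hlim : is_lim_seq (zeta_partial s) (zeta s)).
  { assert (Hex : ex_finite_lim_seq (zeta_partial s)).
    { apply (ex_finite_lim_seq_incr _
               (zeta_partial s 0 + Rpower (INR (0 + 1)) (1 - s) / (s - 1))).
      - intros n. apply zeta_partial_le. lia.
      - intros n. pose proof (zeta_partial_tail_le s 0 n Hs ltac:(lia)). lra. }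
    destruct Hex as [l Hl].
    replace (zeta s) with l; [exact Hl|].
    symmetry. unfold zeta. apply is_series_unique. exact Hl. }
  rewrite <- (zeta_partial_0 s).
  apply (is_lim_seq_le (fun _ => zeta_partial s 0) (zeta_partial s)
           (zeta_partial s 0) (zeta s));
    [intros n; apply zeta_partial_le; lia | apply is_lim_seq_const | exact Hlim].
Qed.

Lemma Rpower_INR_vanishes p eps : p < 0 -> 0 < eps ->
  exists N : nat, Rpower (INR (N + 1)) p < eps.
Proof.
  intros Hp Heps. destruct (INR_unbounded (exp (ln eps / p))) as [N HN].
  exists N. unfold Rpower.
  rewrite <- (exp_ln eps) by exact Heps. apply exp_increasing.
  assert (ln eps / p < ln (INR (N + 1))).
  { rewrite <- (ln_exp (ln eps / p)). apply ln_increasing; [apply exp_pos|].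
    rewrite plus_INR. simpl. lra. }
  replace (ln eps) with (p * (ln eps / p)) by (field; lra).
  nra.
Qed.

Lemma Rpower_INR_div_le a s N n : 1 < a <= s -> (N <= n)%nat ->
  Rpower (INR (n + 1)) (1 - s) / (s - 1) <= Rpower (INR (N + 1)) (1 - a) / (a - 1).
Proof.
  intros Has HNn.
  assert (HlnN : 0 <= ln (INR (N + 1))).
  { rewrite <- ln_1. apply ln_le; [lra|]. rewrite plus_INR. simpl.
    pose proof (pos_INR N). lra. }
  assert (Hln : ln (INR (N + 1)) <= ln (INR (n + 1))).
  { apply ln_le; [apply lt_0_INR; lia | apply le_INR; lia]. }
  assert (Hpow : Rpower (INR (n + 1)) (1 - s) <= Rpower (INR (N + 1)) (1 - a)).
  { unfold Rpower. apply Rnot_lt_le. intros Hlt. apply exp_lt_inv in Hlt. nra. }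
  unfold Rdiv. apply Rmult_le_compat; try lra.
  - left. apply exp_pos.
  - left. apply Rinv_0_lt_compat. lra.
  - apply Rinv_le_contravar; lra.
Qed.

Lemma zeta_partial_uniformly_cauchy a : 1 < a ->
  CVU_cauchy (fun n s => zeta_partial s n) (fun s => a < s).
Proof.
  intros Ha eps.
  destruct (Rpower_INR_vanishes (1 - a) (eps * (a - 1)) ltac:(lra)
              ltac:(apply Rmult_lt_0_compat; [apply cond_pos | lra])) as [N HN].
  assert (HNeps : Rpower (INR (N + 1)) (1 - a) / (a - 1) < eps).
  { apply (Rmult_lt_reg_r (a - 1)); [lra|].
    replace (Rpower (INR (N + 1)) (1 - a) / (a - 1) * (a - 1))
      with (Rpower (INR (N + 1)) (1 - a)) by (field; lra). lra. }
  assert (Hbound : forall s n m, a < s -> (N <= n <= m)%nat ->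
            Rabs (zeta_partial s n - zeta_partial s m) < eps).
  { intros s n m Hs Hnm.
    rewrite Rabs_left1 by (pose proof (zeta_partial_le s n m ltac:(lia)); lra).
    pose proof (zeta_partial_tail_le s n m ltac:(lra) ltac:(lia)).
    pose proof (Rpower_INR_div_le a s N n ltac:(lra) ltac:(lia)).
    lra. }
  exists N. intros n m s Hs Hn Hm.
  destruct (Nat.le_ge_cases n m).
  - apply Hbound; [exact Hs | lia].
  - rewrite Rabs_minus_sym. apply Hbound; [exact Hs | lia].
Qed.

Lemma zeta_partial_continuous n s : continuous (fun s => zeta_partial s n) s.
Proof.
  apply (ex_derive_continuous (fun s => zeta_partial s n)).
  apply (ex_derive_sum_n (fun k s => / Rpower (INR (k + 1)) s)). intros k _.
  unfold Rpower. auto_derive. apply Rgt_not_eq, exp_pos.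
Qed.

Lemma zeta_continuous s : 1 < s -> continuous zeta s.
Proof.
  intros Hs. apply continuity_pt_filterlim.
  apply (CVU_cont_open (fun n s => zeta_partial s n) (fun u => (1 + s) / 2 < u)).
  - apply open_gt.
  - apply CVU_dom_cauchy, zeta_partial_uniformly_cauchy. lra.
  - intros n x _. apply continuity_pt_filterlim, zeta_partial_continuous.
  - lra.
Qed.

(* Coquelicot states these over abstract normed modules ([plus], [mult], [scal]); the
   forms below, specialised to [R], are the ones [apply] and [rewrite] can unify with. *)
Lemma continuous_Rplus (f g : R -> R) x :
  continuous f x -> continuous g x -> continuous (fun y => f y + g y) x.
Proof. exact (continuous_plus f g x). Qed.

Lemma continuous_Rmult (f g : R -> R) x :
  continuous f x -> continuous g x -> continuous (fun y => f y * g y) x.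
Proof. exact (continuous_mult f g x). Qed.

Lemma continuous_of_ex_derive (f : R -> R) x : ex_derive f x -> continuous f x.
Proof. exact (ex_derive_continuous f x). Qed.

Lemma ex_RInt_Rplus (f g : R -> R) a b :
  ex_RInt f a b -> ex_RInt g a b -> ex_RInt (fun x => f x + g x) a b.
Proof. exact (ex_RInt_plus f g a b). Qed.

Lemma ex_RInt_Rscal (f : R -> R) k a b : ex_RInt f a b -> ex_RInt (fun x => k * f x) a b.
Proof. exact (ex_RInt_scal f a b k). Qed.

Lemma ex_RInt_Rconst (v a b : R) : ex_RInt (fun _ => v) a b.
Proof. exact (ex_RInt_const a b v). Qed.

Lemma RInt_Rplus (f g : R -> R) a b : ex_RInt f a b -> ex_RInt g a b ->
  RInt (fun x => f x + g x) a b = RInt (fun x => f x) a b + RInt (fun x => g x) a b.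
Proof. exact (RInt_plus f g a b). Qed.

Lemma RInt_Rscal (f : R -> R) k a b : ex_RInt f a b ->
  RInt (fun x => k * f x) a b = k * RInt (fun x => f x) a b.
Proof. exact (RInt_scal f a b k). Qed.

Lemma RInt_Rconst (v a b : R) : RInt (fun _ => v) a b = (b - a) * v.
Proof. exact (RInt_const a b v). Qed.

Lemma ex_RInt_Rcontinuous_on (f : R -> R) a b : a <= b ->
  (forall x, a <= x <= b -> continuous f x) -> ex_RInt f a b.
Proof.
  intros Hab Hf. apply (@ex_RInt_continuous R_CompleteNormedModule).
  rewrite Rmin_left, Rmax_right by lra. exact Hf.
Qed.

Lemma ex_RInt_Rcontinuous (f : R -> R) a b : (forall x, continuous f x) -> ex_RInt f a b.
Proof. intros Hf. apply (@ex_RInt_continuous R_CompleteNormedModule). auto. Qed.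

Lemma ex_RInt_smooth (f : R -> R) a b : (forall x, ex_derive f x) -> ex_RInt f a b.
Proof. intros Hf. apply ex_RInt_Rcontinuous. intros. apply continuous_of_ex_derive, Hf. Qed.

Lemma ex_RInt_smooth_mul (p g : R -> R) a b : (forall x, ex_derive p x) ->
  (forall x, continuous g x) -> ex_RInt (fun x => p x * g x) a b.
Proof.
  intros Hp Hg. apply ex_RInt_Rcontinuous. intros.
  apply continuous_Rmult; [apply continuous_of_ex_derive, Hp | apply Hg].
Qed.

Lemma RInt_le_of_eq_on_interior (f g h : R -> R) a b : a <= b ->
  (forall x, a < x < b -> f x = g x) -> ex_RInt g a b -> ex_RInt h a b ->
  (forall x, a < x < b -> f x <= h x) ->
  ex_RInt f a b /\ RInt f a b <= RInt h a b.
Proof.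
  intros Hab Hfg Hg Hh Hfh.
  assert (Hf : ex_RInt f a b).
  { apply (ex_RInt_ext g); [|exact Hg].
    rewrite Rmin_left, Rmax_right by lra. intros x Hx. symmetry. auto. }
  split; [exact Hf|]. apply RInt_le; auto.
Qed.

(* Hypotheses are matched syntactically: [assumption] would try conversions that
   unfold the construction of the real numbers and do not terminate in practice. *)
Ltac solve_ex_RInt :=
  repeat match goal with
  | H : ?P |- ?P => exact H
  | |- ex_RInt (fun _ => _ + _) _ _ => apply ex_RInt_Rplus
  | |- ex_RInt (fun _ => _ * _) _ _ => apply ex_RInt_Rscal
  | |- ex_RInt (fun _ => ?v) _ _ => apply ex_RInt_Rconst
  end.

Lemma continuous_ln_zeta_comp (f : R -> R) x : continuous f x -> 1 < f x ->
  continuous (fun y => ln (zeta (f y))) x.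
Proof.
  intros Hf Hfx. apply (continuous_comp (fun y => zeta (f y)) ln).
  - apply (continuous_comp f zeta); [exact Hf | apply zeta_continuous, Hfx].
  - apply continuous_ln. pose proof (zeta_ge_1 _ Hfx). lra.
Qed.

Lemma continuous_Lstar c r j x : continuous (fun th => Lstar c r j th) x.
Proof. apply continuous_of_ex_derive. unfold Lstar. auto_derive. exact I. Qed.

Lemma continuous_Lj c r T j x : 0 < T -> continuous (fun th => Lj c r T j th) x.
Proof.
  intros HT.
  set (p th := (IZR j + c + r * cos th) ^ 2 / (T + 2) ^ 2).
  set (q u := (u + T) ^ 2 / (T + 2) ^ 2).
  apply (continuous_ext (fun th => ln (p th + q (Rabs (r * sin th))))).
  { intros th. unfold Lj, p, q. f_equal. field. lra. }
  apply (continuous_comp (fun th => p th + q (Rabs (r * sin th))) ln).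
  - apply continuous_Rplus.
    + apply continuous_of_ex_derive. unfold p. auto_derive. lra.
    + apply (continuous_comp (fun th => Rabs (r * sin th)) q).
      * apply continuous_Rabs_comp, continuous_of_ex_derive. auto_derive. exact I.
      * apply continuous_of_ex_derive. unfold q. auto_derive. lra.
  - apply continuous_ln. unfold p, q.
    pose proof (Rabs_pos (r * sin x)).
    assert (0 < (Rabs (r * sin x) + T) ^ 2 / (T + 2) ^ 2).
    { apply Rdiv_lt_0_compat; apply pow_lt; lra. }
    assert (0 <= (IZR j + c + r * cos x) ^ 2 / (T + 2) ^ 2).
    { apply Rdiv_le_0_compat; [apply pow2_ge_0 | apply pow_lt; lra]. }
    lra.
Qed.

(* Writing [Q] for the argument of the logarithm in [Lj], [ln Q <= Q - 1] and
   [Q - 1 = 2 (b - 2) / (T + 2) + (a^2 + (b - 2)^2) / (T + 2)^2]; the last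
   denominator is absorbed because [1 / (T + 2) <= 7/19] exactly when [T >= 5/7]. *)
Lemma Lj_le_Lstar c r T j th : 5/7 <= T -> 0 <= r * sin th ->
  Lj c r T j th <= Lstar c r j th / (T + 2).
Proof.
  intros HT Hs. unfold Lj, Lstar.
  rewrite Rabs_right by lra.
  set (a := IZR j + c + r * cos th). set (b := r * sin th) in *.
  set (Q := (a ^ 2 + (b + T) ^ 2) / (T + 2) ^ 2).
  assert (HQ : 0 < Q).
  { unfold Q. apply Rdiv_lt_0_compat; [|apply pow_lt; lra].
    assert (0 < (b + T) ^ 2) by (apply pow_lt; lra). pose proof (pow2_ge_0 a). lra. }
  assert (Hln : ln Q <= Q - 1).
  { pose proof (exp_ineq1_le (ln Q)) as E. rewrite exp_ln in E by exact HQ. lra. }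
  assert (HQ1 : Q - 1 <= (2 * b - 4 + 7 / 19 * (a ^ 2 + (b - 2) ^ 2)) / (T + 2)).
  { unfold Q. apply (Rmult_le_reg_r ((T + 2) ^ 2)); [apply pow_lt; lra|].
    replace (((a ^ 2 + (b + T) ^ 2) / (T + 2) ^ 2 - 1) * (T + 2) ^ 2)
      with ((T + 2) * (2 * b - 4) + (a ^ 2 + (b - 2) ^ 2)) by (field; lra).
    replace ((2 * b - 4 + 7 / 19 * (a ^ 2 + (b - 2) ^ 2)) / (T + 2) * (T + 2) ^ 2)
      with ((T + 2) * (2 * b - 4) + (T + 2) * (7 / 19) * (a ^ 2 + (b - 2) ^ 2))
      by (field; lra).
    assert (0 <= a ^ 2 + (b - 2) ^ 2)
      by (pose proof (pow2_ge_0 a); pose proof (pow2_ge_0 (b - 2)); lra).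
    nra. }
  replace (2 * r * sin th) with (2 * b) by (unfold b; ring). lra.
Qed.

Lemma round0_eq_0 x : - (1/2) <= x <= 1/2 -> round0 x = 0%Z.
Proof.
  intros Hx. unfold round0.
  destruct (Rlt_le_dec x 0) as [Hneg | Hnneg];
    [rewrite <- (tech_up x 0) | rewrite <- (tech_up x 1)]; simpl; try lra;
    repeat match goal with |- context [Rlt_dec ?u ?v] => destruct (Rlt_dec u v) end;
    (reflexivity || lra).
Qed.

Lemma le_acos_iff u th : -1 <= u <= 1 -> 0 <= th <= PI ->
  th <= acos u <-> u <= cos th.
Proof.
  intros Hu Hth. pose proof (acos_bound u) as Hacos. split; intros H.
  - rewrite <- (cos_acos u Hu) at 1. apply cos_decr_1; lra.
  - apply cos_decr_0; try lra. rewrite cos_acos; lra.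
Qed.

Lemma acos_le_iff u th : -1 <= u <= 1 -> 0 <= th <= PI ->
  acos u <= th <-> cos th <= u.
Proof.
  intros Hu Hth. pose proof (acos_bound u) as Hacos. split; intros H.
  - rewrite <- (cos_acos u Hu). apply cos_decr_1; lra.
  - apply cos_decr_0; try lra. rewrite cos_acos; lra.
Qed.

Lemma theta_y_bounds c r y : 0 <= theta_y c r y <= PI.
Proof.
  unfold theta_y. pose proof PI_RGT_0. pose proof (acos_bound ((y - c) / r)).
  destruct (Rle_dec (c + r) y); [lra|]. destruct (Rle_dec y (c - r)); lra.
Qed.

Lemma theta_y_below c r y : 0 < r -> y <= c - r -> theta_y c r y = PI.
Proof.
  intros Hr Hy. unfold theta_y.
  destruct (Rle_dec (c + r) y); [lra|]. destruct (Rle_dec y (c - r)); [reflexivity | lra].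
Qed.

Lemma le_theta_y_iff c r y th : 0 < r -> c - r < y < c + r -> 0 <= th <= PI ->
  th <= theta_y c r y <-> y <= c + r * cos th.
Proof.
  intros Hr Hy Hth. unfold theta_y.
  destruct (Rle_dec (c + r) y); [lra|]. destruct (Rle_dec y (c - r)); [lra|].
  set (u := (y - c) / r).
  assert (Hyu : y = c + r * u) by (unfold u; field; lra).
  rewrite le_acos_iff by (auto; split; nra).
  rewrite Hyu. split; intros; nra.
Qed.

Lemma theta_y_le_iff c r y th : 0 < r -> c - r < y < c + r -> 0 <= th <= PI ->
  theta_y c r y <= th <-> c + r * cos th <= y.
Proof.
  intros Hr Hy Hth. unfold theta_y.
  destruct (Rle_dec (c + r) y); [lra|]. destruct (Rle_dec y (c - r)); [lra|].
  set (u := (y - c) / r).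
  assert (Hyu : y = c + r * u) by (unfold u; field; lra).
  rewrite acos_le_iff by (auto; split; nra).
  rewrite Hyu. split; intros; nra.
Qed.

Lemma theta_y_antitone c r y1 y2 : 0 < r -> c - r < y1 <= y2 -> y2 < c + r ->
  theta_y c r y2 <= theta_y c r y1.
Proof.
  intros Hr Hy Hy2. pose proof (theta_y_bounds c r y2).
  apply le_theta_y_iff; [lra | lra | lra |].
  enough (y2 <= c + r * cos (theta_y c r y2)) by lra.
  apply le_theta_y_iff; lra.
Qed.

Section Regions.

Variables (nK : nat) (d c r eta T : R).
Hypotheses (hr : 0 < r) (heta : 0 < eta) (hT : 5/7 <= T).

Lemma F_cr_high th : 1 + eta <= c + r * cos th ->
  F_cr nK d c r eta T th
  = INR nK * ln (zeta (c + r * cos th)) + 1/2 * Lj c r T (-1) th + ln (T + 2).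
Proof.
  intros H. unfold F_cr. cbv zeta.
  destruct (Rle_dec (1 + eta) (c + r * cos th)); [reflexivity | contradiction].
Qed.

Lemma F_cr_mid th : - eta <= c + r * cos th < 1 + eta ->
  F_cr nK d c r eta T th
  = INR nK * ln (zeta (1 + eta))
    + (INR nK * (1 + eta - (c + r * cos th)) + 2) / 4 * Lj c r T 1 th
    + (INR nK * (1 + eta - (c + r * cos th)) + 2) / 2 * ln (T + 2)
    + (1 + eta - (c + r * cos th)) / 2 * ln (d / (2 * PI) ^ nK) + ln 3.
Proof.
  intros H. unfold F_cr. cbv zeta.
  destruct (Rle_dec (1 + eta) (c + r * cos th)); [lra|].
  destruct (Rle_dec (- eta) (c + r * cos th)); [reflexivity | lra].
Qed.

Lemma F_cr_low th : - (1/2) <= c + r * cos th < - eta ->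
  F_cr nK d c r eta T th
  = INR nK * ln (zeta (1 - (c + r * cos th))) + 1/2 * Lj c r T (-1) th + ln (T + 2)
    + (1 - 2 * (c + r * cos th)) / 2 * ln (d * (T + 2) ^ nK / (2 * PI) ^ nK)
    + (1 - 2 * (c + r * cos th)) * INR nK / 4 * Lj c r T 1 th.
Proof.
  intros H. unfold F_cr. cbv zeta.
  destruct (Rle_dec (1 + eta) (c + r * cos th)); [lra|].
  destruct (Rle_dec (- eta) (c + r * cos th)); [lra|].
  rewrite round0_eq_0 by lra. simpl. rewrite !Rmult_0_r, !Rplus_0_r. reflexivity.
Qed.

Lemma Lj_le_Lstar_on_0_PI j th : 0 <= th <= PI -> Lj c r T j th <= Lstar c r j th / (T + 2).
Proof.
  intros Hth. apply Lj_le_Lstar; [exact hT|].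
  apply Rmult_le_pos; [lra | apply sin_ge_0; lra].
Qed.

Lemma F_cr_high_le th : 0 <= th <= PI -> 1 + eta <= c + r * cos th ->
  F_cr nK d c r eta T th
  <= INR nK * ln (zeta (c + r * cos th))
     + 1 / (2 * (T + 2)) * Lstar c r (-1) th + ln (T + 2).
Proof.
  intros Hth Hsigma. rewrite F_cr_high by exact Hsigma.
  pose proof (Lj_le_Lstar_on_0_PI (-1) th Hth).
  assert (1 / (2 * (T + 2)) * Lstar c r (-1) th = 1/2 * (Lstar c r (-1) th / (T + 2)))
    by (field; lra).
  lra.
Qed.

Lemma F_cr_mid_le th : 0 < d -> 0 <= th <= PI -> - eta <= c + r * cos th < 1 + eta ->
  F_cr nK d c r eta T th
  <= INR nK * ln (zeta (1 + eta))
     + ln (d * (T + 2) ^ nK / (2 * PI) ^ nK) * ((1 + eta - (c + r * cos th)) / 2)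
     + INR nK / (T + 2) * (1 / 4 * ((1 + eta - (c + r * cos th)) * Lstar c r 1 th))
     + 1 / (2 * (T + 2)) * Lstar c r 1 th + ln (3 * (T + 2)).
Proof.
  intros Hd Hth Hsigma. rewrite F_cr_mid by exact Hsigma.
  assert (HlnD : ln (d * (T + 2) ^ nK / (2 * PI) ^ nK)
                 = ln (d / (2 * PI) ^ nK) + INR nK * ln (T + 2)).
  { assert (0 < (2 * PI) ^ nK) by (apply pow_lt; pose proof PI_RGT_0; lra).
    assert (0 < (T + 2) ^ nK) by (apply pow_lt; lra).
    rewrite <- ln_pow, <- ln_mult by (try apply Rdiv_lt_0_compat; lra).
    f_equal. field. lra. }
  rewrite HlnD, (ln_mult 3 (T + 2)) by lra.
  set (e := 1 + eta - (c + r * cos th)).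
  assert (Hcoef : 0 <= (INR nK * e + 2) / 4).
  { pose proof (pos_INR nK). assert (0 <= INR nK * e) by (apply Rmult_le_pos; unfold e; lra).
    lra. }
  pose proof (Rmult_le_compat_l _ _ _ Hcoef (Lj_le_Lstar_on_0_PI 1 th Hth)).
  assert (INR nK / (T + 2) * (1 / 4 * (e * Lstar c r 1 th)) + 1 / (2 * (T + 2)) * Lstar c r 1 th
          = (INR nK * e + 2) / 4 * (Lstar c r 1 th / (T + 2))) by (field; lra).
  nra.
Qed.

Lemma F_cr_low_le th : 0 <= th <= PI -> - (1/2) <= c + r * cos th < - eta ->
  F_cr nK d c r eta T th
  <= INR nK * ln (zeta (1 - (c + r * cos th)))
     + 1 / (2 * (T + 2)) * Lstar c r (-1) th + ln (T + 2)
     + ln (d * (T + 2) ^ nK / (2 * PI) ^ nK) * ((1 - 2 * (c + r * cos th)) / 2)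
     + INR nK / (T + 2) * (1 / 4 * ((1 - 2 * (c + r * cos th)) * Lstar c r 1 th)).
Proof.
  intros Hth Hsigma. rewrite F_cr_low by exact Hsigma.
  set (e := 1 - 2 * (c + r * cos th)).
  assert (Hcoef : 0 <= e * INR nK / 4).
  { pose proof (pos_INR nK). assert (0 <= e * INR nK) by (apply Rmult_le_pos; unfold e; lra).
    lra. }
  pose proof (Rmult_le_compat_l _ _ _ Hcoef (Lj_le_Lstar_on_0_PI 1 th Hth)).
  pose proof (Lj_le_Lstar_on_0_PI (-1) th Hth).
  assert (INR nK / (T + 2) * (1 / 4 * (e * Lstar c r 1 th))
          = e * INR nK / 4 * (Lstar c r 1 th / (T + 2))) by (field; lra).
  assert (1 / (2 * (T + 2)) * Lstar c r (-1) th = 1/2 * (Lstar c r (-1) th / (T + 2)))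
    by (field; lra).
  lra.
Qed.

Lemma RInt_F_cr_high_le a b : 0 <= a <= b -> b <= PI ->
  (forall th, a <= th <= b -> 1 + eta <= c + r * cos th) ->
  ex_RInt (F_cr nK d c r eta T) a b /\
  RInt (F_cr nK d c r eta T) a b
  <= INR nK * RInt (fun th => ln (zeta (c + r * cos th))) a b
     + 1 / (2 * (T + 2)) * RInt (fun th => Lstar c r (-1) th) a b
     + (b - a) * ln (T + 2).
Proof.
  intros Hab HbPI Hsigma.
  assert (IZ : ex_RInt (fun th => ln (zeta (c + r * cos th))) a b).
  { apply ex_RInt_Rcontinuous_on; [lra|]. intros th Hth.
    apply continuous_ln_zeta_comp; [|specialize (Hsigma th Hth); lra].
    apply continuous_of_ex_derive. auto_derive. exact I. }
  assert (IL : ex_RInt (fun th => Lstar c r (-1) th) a b)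
    by (apply ex_RInt_Rcontinuous, continuous_Lstar).
  assert (IJ : ex_RInt (fun th => Lj c r T (-1) th) a b)
    by (apply ex_RInt_Rcontinuous; intros; apply continuous_Lj; lra).
  destruct (RInt_le_of_eq_on_interior (F_cr nK d c r eta T)
    (fun th => INR nK * ln (zeta (c + r * cos th)) + 1/2 * Lj c r T (-1) th + ln (T + 2))
    (fun th => INR nK * ln (zeta (c + r * cos th))
               + 1 / (2 * (T + 2)) * Lstar c r (-1) th + ln (T + 2)) a b)
    as [IF Hle]; [lra | | solve_ex_RInt | solve_ex_RInt | |].
  - intros th Hth. apply F_cr_high, Hsigma. lra.
  - intros th Hth. apply F_cr_high_le; [lra | apply Hsigma; lra].
  - split; [exact IF|].
    rewrite !RInt_Rplus, !RInt_Rscal, RInt_Rconst in Hle by solve_ex_RInt. lra.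
Qed.

Lemma RInt_F_cr_mid_le a b : 0 < d -> 0 <= a <= b -> b <= PI ->
  (forall th, a < th < b -> - eta <= c + r * cos th < 1 + eta) ->
  ex_RInt (F_cr nK d c r eta T) a b /\
  RInt (F_cr nK d c r eta T) a b
  <= INR nK * ln (zeta (1 + eta)) * (b - a)
     + ln (d * (T + 2) ^ nK / (2 * PI) ^ nK)
       * RInt (fun th => (1 + eta - (c + r * cos th)) / 2) a b
     + INR nK / (T + 2)
       * (1 / 4 * RInt (fun th => (1 + eta - (c + r * cos th)) * Lstar c r 1 th) a b)
     + 1 / (2 * (T + 2)) * RInt (fun th => Lstar c r 1 th) a b
     + (b - a) * ln (3 * (T + 2)).
Proof.
  intros Hd Hab HbPI Hsigma.
  assert (IE : ex_RInt (fun th => (1 + eta - (c + r * cos th)) / 2) a b)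
    by (apply ex_RInt_smooth; intros; auto_derive; exact I).
  assert (IEd : ex_RInt (fun th => (1 + eta - (c + r * cos th)) / 2
                                   * ln (d / (2 * PI) ^ nK)) a b)
    by (apply ex_RInt_smooth; intros; auto_derive; exact I).
  assert (IET : ex_RInt (fun th => (INR nK * (1 + eta - (c + r * cos th)) + 2) / 2
                                   * ln (T + 2)) a b)
    by (apply ex_RInt_smooth; intros; auto_derive; exact I).
  assert (IEJ : ex_RInt (fun th => (INR nK * (1 + eta - (c + r * cos th)) + 2) / 4
                                   * Lj c r T 1 th) a b).
  { apply ex_RInt_smooth_mul; [intros; auto_derive; exact I | intros; apply continuous_Lj; lra]. }
  assert (IEL : ex_RInt (fun th => (1 + eta - (c + r * cos th)) * Lstar c r 1 th) a b).
  { apply ex_RInt_smooth_mul; [intros; auto_derive; exact I | apply continuous_Lstar]. }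
  assert (IL : ex_RInt (fun th => Lstar c r 1 th) a b)
    by (apply ex_RInt_Rcontinuous, continuous_Lstar).
  destruct (RInt_le_of_eq_on_interior (F_cr nK d c r eta T)
    (fun th => INR nK * ln (zeta (1 + eta))
      + (INR nK * (1 + eta - (c + r * cos th)) + 2) / 4 * Lj c r T 1 th
      + (INR nK * (1 + eta - (c + r * cos th)) + 2) / 2 * ln (T + 2)
      + (1 + eta - (c + r * cos th)) / 2 * ln (d / (2 * PI) ^ nK) + ln 3)
    (fun th => INR nK * ln (zeta (1 + eta))
      + ln (d * (T + 2) ^ nK / (2 * PI) ^ nK) * ((1 + eta - (c + r * cos th)) / 2)
      + INR nK / (T + 2) * (1 / 4 * ((1 + eta - (c + r * cos th)) * Lstar c r 1 th))
      + 1 / (2 * (T + 2)) * Lstar c r 1 th + ln (3 * (T + 2))) a b)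
    as [IF Hle]; [lra | | solve_ex_RInt | solve_ex_RInt | |].
  - intros th Hth. apply F_cr_mid, Hsigma, Hth.
  - intros th Hth. apply F_cr_mid_le; [exact Hd | lra | apply Hsigma, Hth].
  - split; [exact IF|].
    rewrite !RInt_Rplus, !RInt_Rscal, !RInt_Rconst in Hle by solve_ex_RInt. lra.
Qed.

Lemma RInt_F_cr_low_le a b : 0 <= a <= b -> b <= PI ->
  (forall th, a <= th <= b -> - (1/2) <= c + r * cos th < 0) ->
  (forall th, a < th < b -> c + r * cos th < - eta) ->
  ex_RInt (F_cr nK d c r eta T) a b /\
  RInt (F_cr nK d c r eta T) a b
  <= INR nK * RInt (fun th => ln (zeta (1 - (c + r * cos th)))) a b
     + 1 / (2 * (T + 2)) * RInt (fun th => Lstar c r (-1) th) a b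
     + (b - a) * ln (T + 2)
     + ln (d * (T + 2) ^ nK / (2 * PI) ^ nK)
       * RInt (fun th => (1 - 2 * (c + r * cos th)) / 2) a b
     + INR nK / (T + 2)
       * (1 / 4 * RInt (fun th => (1 - 2 * (c + r * cos th)) * Lstar c r 1 th) a b).
Proof.
  intros Hab HbPI Hsigma Hbranch.
  assert (IZ : ex_RInt (fun th => ln (zeta (1 - (c + r * cos th)))) a b).
  { apply ex_RInt_Rcontinuous_on; [lra|]. intros th Hth.
    apply continuous_ln_zeta_comp; [|specialize (Hsigma th Hth); lra].
    apply continuous_of_ex_derive. auto_derive. exact I. }
  assert (IL : ex_RInt (fun th => Lstar c r (-1) th) a b)
    by (apply ex_RInt_Rcontinuous, continuous_Lstar).
  assert (IJ : ex_RInt (fun th => Lj c r T (-1) th) a b)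
    by (apply ex_RInt_Rcontinuous; intros; apply continuous_Lj; lra).
  assert (IE : ex_RInt (fun th => (1 - 2 * (c + r * cos th)) / 2) a b)
    by (apply ex_RInt_smooth; intros; auto_derive; exact I).
  assert (IED : ex_RInt (fun th => (1 - 2 * (c + r * cos th)) / 2
                                   * ln (d * (T + 2) ^ nK / (2 * PI) ^ nK)) a b)
    by (apply ex_RInt_smooth; intros; auto_derive; exact I).
  assert (IEJ : ex_RInt (fun th => (1 - 2 * (c + r * cos th)) * INR nK / 4
                                   * Lj c r T 1 th) a b).
  { apply ex_RInt_smooth_mul; [intros; auto_derive; exact I | intros; apply continuous_Lj; lra]. }
  assert (IEL : ex_RInt (fun th => (1 - 2 * (c + r * cos th)) * Lstar c r 1 th) a b).
  { apply ex_RInt_smooth_mul; [intros; auto_derive; exact I | apply continuous_Lstar]. }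
  destruct (RInt_le_of_eq_on_interior (F_cr nK d c r eta T)
    (fun th => INR nK * ln (zeta (1 - (c + r * cos th))) + 1/2 * Lj c r T (-1) th
      + ln (T + 2)
      + (1 - 2 * (c + r * cos th)) / 2 * ln (d * (T + 2) ^ nK / (2 * PI) ^ nK)
      + (1 - 2 * (c + r * cos th)) * INR nK / 4 * Lj c r T 1 th)
    (fun th => INR nK * ln (zeta (1 - (c + r * cos th)))
      + 1 / (2 * (T + 2)) * Lstar c r (-1) th + ln (T + 2)
      + ln (d * (T + 2) ^ nK / (2 * PI) ^ nK) * ((1 - 2 * (c + r * cos th)) / 2)
      + INR nK / (T + 2) * (1 / 4 * ((1 - 2 * (c + r * cos th)) * Lstar c r 1 th))) a b)
    as [IF Hle]; [lra | | solve_ex_RInt | solve_ex_RInt | |].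
  - intros th Hth. apply F_cr_low.
    specialize (Hsigma th ltac:(lra)). specialize (Hbranch th Hth). lra.
  - intros th Hth. apply F_cr_low_le; [lra|].
    specialize (Hsigma th ltac:(lra)). specialize (Hbranch th Hth). lra.
  - split; [exact IF|].
    rewrite !RInt_Rplus, !RInt_Rscal, !RInt_Rconst in Hle by solve_ex_RInt. lra.
Qed.

End Regions.

Theorem proposition3p12 (nK dK : nat) (c r eta T : R)
  (hnK : (1 <= nK)%nat) (hdK : (1 <= dK)%nat)
  (hc : 0 < c) (hr : 0 < r) (heta : 0 < eta) (heta2 : eta <= 1/2)
  (h1 : - (1/2) < c - r) (h2 : c - r < - eta) (h3 : - eta < 1 + eta)
  (h4 : 1 + eta < c) (hT : 5/7 <= T) :
  let n := INR nK in
  let d := INR dK in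
  let t1 := theta_y c r (1 + eta) in
  let t2 := theta_y c r (- eta) in
  RInt (F_cr nK d c r eta T) 0 PI <=
    n * RInt (fun th => ln (zeta (c + r * cos th))) 0 t1
  + 1 / (2 * (T + 2)) * RInt (fun th => Lstar c r (-1) th) 0 t1
  + t1 * ln (T + 2)
  + n * ln (zeta (1 + eta)) * (t2 - t1)
  + ln (d * (T + 2) ^ nK / (2 * PI) ^ nK) * kappa1 c r eta
  + n / (T + 2) * kappa4 c r eta
  + 1 / (2 * (T + 2)) * RInt (fun th => Lstar c r 1 th) t1 t2
  + (t2 - t1) * ln (3 * (T + 2))
  + n * RInt (fun th => ln (zeta (1 - (c + r * cos th)))) t2 PI
  + 1 / (2 * (T + 2)) * RInt (fun th => Lstar c r (-1) th) t2 PI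
  + (PI - t2) * ln (T + 2)
  + n / (T + 2) * kappa5 c r eta.
Proof.
  unfold kappa1, kappa4, kappa5. rewrite (theta_y_below c r (- (1/2))) by lra.
  cbv zeta. set (t1 := theta_y c r (1 + eta)). set (t2 := theta_y c r (- eta)).
  assert (Hd : 0 < INR dK) by (apply lt_0_INR; lia).
  assert (Bt1 : 0 <= t1 <= PI) by apply theta_y_bounds.
  assert (Bt2 : 0 <= t2 <= PI) by apply theta_y_bounds.
  assert (Ht12 : t1 <= t2) by (apply theta_y_antitone; lra).
  destruct (RInt_F_cr_high_le nK (INR dK) c r eta T hr heta hT 0 t1) as [I1 B1];
    [lra | lra | intros th Hth; apply le_theta_y_iff; fold t1; lra |].
  destruct (RInt_F_cr_mid_le nK (INR dK) c r eta T hr hT t1 t2) as [I2 B2];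
    [exact Hd | lra | lra | intros th Hth; split |].
  { apply le_theta_y_iff; fold t2; lra. }
  { apply Rnot_le_lt. rewrite <- (le_theta_y_iff c r (1 + eta)); fold t1; lra. }
  destruct (RInt_F_cr_low_le nK (INR dK) c r eta T hr heta hT t2 PI) as [I3 B3];
    [lra | lra | intros th Hth | |].
  { pose proof (COS_bound th). enough (c + r * cos th <= - eta) by nra.
    apply theta_y_le_iff; fold t2; lra. }
  { intros th Hth. apply Rnot_le_lt. rewrite <- (le_theta_y_iff c r (- eta)); fold t2; lra. }
  rewrite <- (RInt_Chasles _ 0 t1 PI I1 (ex_RInt_Chasles _ t1 t2 PI I2 I3)),
          <- (RInt_Chasles _ t1 t2 PI I2 I3).
  unfold plus. simpl. lra.
Qed.
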